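(* Consider an RBM with observed variables $X\in\{-1,1\}^n$ and parameters $J,h,g$ as in the context. Fix an observed variable $u$ and subsets $I,S\subseteq[n]$ such that $\{u\},I,S$ are pairwise disjoint, and assignments $x_u,x_I,x_S$. Then \[\nu_{u,I|S}(x_u,x_I|x_S)=\Big|\sum_{q\in\{-1,1\}^m}\bar f(q,x_u,x_S)\prod_{i\in I}\sigma(2x_i(J^{(i)}\cdot q+h_i))\Big|,\] where \[\bar f(q,x_u,x_S)=\lambda(q,x_S)\Big[\sigma(2x_u(J^{(u)}\cdot q+h_u))-\mathbb{E}_{q'\sim\lambda(\cdot,x_S)}\sigma(2x_u(J^{(u)}\cdot q'+h_u))\Big],\] \[\lambda(q,x_S)=\frac{e^{g\cdot q}\prod_{i\in S}e^{x_i(J^{(i)}\cdot q+h_i)}\prod_{i\in[n]\setminus S}\cosh(J^{(i)}\cdot q+h_i)}{\sum_{q'\in\{-1,1\}^m}e^{g\cdot q'}\prod_{i\in S}e^{x_i(J^{(i)}\cdot q'+h_i)}\prod_{i\in[n]\setminus S}\cosh(J^{(i)}\cdot q'+h_i)}.\]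
   Context: RBM: $\mathbb{P}(X=x,Y=y)\propto\exp(x^TJy+h^Tx+g^Ty)$ over observed $X\in\{-1,1\}^n$, latent $Y\in\{-1,1\}^m$, $J\in\mathbb{R}^{n\times m}$, $h\in\mathbb{R}^n$, $g\in\mathbb{R}^m$; probabilities refer to the marginal of $X$. $J^{(i)}$ is the $i$-th row of $J$, $\sigma(t)=1/(1+e^{-t})$. $\nu_{u,I|S}(x_u,x_I|x_S):=|\mathbb{P}(X_u=x_u,X_I=x_I|X_S=x_S)-\mathbb{P}(X_u=x_u|X_S=x_S)\mathbb{P}(X_I=x_I|X_S=x_S)|$. $\mathbb{E}_{q'\sim\lambda(\cdot,x_S)}$ denotes expectation over $q'\in\{-1,1\}^m$ drawn with probability $\lambda(q',x_S)$. *)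

From HB Require Import structures.
From mathcomp Require Import all_boot all_order all_algebra.
From mathcomp Require Import all_classical all_reals all_analysis.
Set Implicit Arguments. Unset Strict Implicit. Unset Printing Implicit Defensive.
Import Order.TTheory GRing.Theory Num.Theory.
Local Open Scope ring_scope.

Section RBM.
Variable R : realType.

Definition spin (b : bool) : R := if b then 1 else -1.

Definition cosh (t : R) : R := (expR t + expR (- t)) / 2.
Definition sigmoid (t : R) : R := 1 / (1 + expR (- t)).

Variables (n m : nat) (J : 'I_n -> 'I_m -> R) (h : 'I_n -> R) (g : 'I_m -> R).

Definition field (i : 'I_n) (q : {ffun 'I_m -> bool}) : R :=
  \sum_(j < m) J i j * spin (q j) + h i.

Definition weight (x : {ffun 'I_n -> bool}) (y : {ffun 'I_m -> bool}) : R :=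
  expR (\sum_(i < n) \sum_(j < m) spin (x i) * J i j * spin (y j)
        + \sum_(i < n) h i * spin (x i) + \sum_(j < m) g j * spin (y j)).

Definition partition_fn : R := \sum_(x : {ffun 'I_n -> bool}) \sum_(y : {ffun 'I_m -> bool}) weight x y.

Definition probX (x : {ffun 'I_n -> bool}) : R :=
  (\sum_(y : {ffun 'I_m -> bool}) weight x y) / partition_fn.

Definition agrees (A : {set 'I_n}) (a x : {ffun 'I_n -> bool}) : bool :=
  [forall i in A, x i == a i].

Definition probE (A : {set 'I_n}) (a : {ffun 'I_n -> bool}) : R :=
  \sum_(x : {ffun 'I_n -> bool} | agrees A a x) probX x.

Definition condP (A S : {set 'I_n}) (a : {ffun 'I_n -> bool}) : R :=
  probE (A :|: S) a / probE S a.

(* nu_{u,I|S}(x_u, x_I | x_S), assignments read off from a single a *)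
Definition nu (u : 'I_n) (I S : {set 'I_n}) (a : {ffun 'I_n -> bool}) : R :=
  `| condP ([set u] :|: I) S a - condP [set u] S a * condP I S a |.

Definition lambda_num (S : {set 'I_n}) (a : {ffun 'I_n -> bool}) (q : {ffun 'I_m -> bool}) : R :=
  expR (\sum_(j < m) g j * spin (q j))
  * (\prod_(i in S) expR (spin (a i) * field i q))
  * (\prod_(i in ~: S) cosh (field i q)).

Definition lambda (S : {set 'I_n}) (a : {ffun 'I_n -> bool}) (q : {ffun 'I_m -> bool}) : R :=
  lambda_num S a q / \sum_(q' : {ffun 'I_m -> bool}) lambda_num S a q'.

Definition fbar (u : 'I_n) (S : {set 'I_n}) (a : {ffun 'I_n -> bool}) (q : {ffun 'I_m -> bool}) : R :=
  lambda S a q *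
  (sigmoid (2 * spin (a u) * field u q)
   - \sum_(q' : {ffun 'I_m -> bool}) lambda S a q' * sigmoid (2 * spin (a u) * field u q')).

End RBM.

From HB Require Import structures.
From mathcomp Require Import all_boot all_order all_algebra.
From mathcomp Require Import all_classical all_reals all_analysis.
From mathcomp Require Import ring.
Import Order.TTheory GRing.Theory Num.Theory.
Local Open Scope ring_scope.

(* Given the latent vector q, the observed spins are independent, and
   [e^(x f) = 2 cosh f * sigmoid (2 x f)] for a spin x: summing an observed
   spin out leaves the factor [2 cosh f], fixing it leaves in addition the
   conditional probability [sigmoid (2 x f)].  Hence, given [X_S = x_S], q is
   distributed as [lambda (., x_S)] and every conditional probability in [nu]
   is a [lambda]-expectation of a product of sigmoids; [nu] is then the
   absolute value of a covariance, which is the claimed sum. *)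

Lemma sum_agrees_prod (I T : finType) (R : comPzSemiRingType) (B : {set I})
    (a : {ffun I -> T}) (G : I -> T -> R) :
  \sum_(x : {ffun I -> T} | [forall i in B, x i == a i]) \prod_i G i (x i)
  = \prod_i (if i \in B then G i (a i) else \sum_t G i t).
Proof.
pose Q i t := (i \in B) ==> (t == a i).
transitivity (\prod_i \sum_(t | Q i t) G i t); last first.
  apply: eq_bigr => i _; rewrite /Q; case: (i \in B) => //=.
  exact: big_pred1_eq.
rewrite bigA_distr_big_dep; apply: eq_bigl => x.
by apply/forall_inP/familyP => [xB i | xQ i iB]; [apply/implyP/xB | exact: implyP (xQ i) _].
Qed.

Lemma sumr_gt0 (T : finType) (R : numDomainType) (t0 : T) (F : T -> R) :
  (forall t, 0 < F t) -> 0 < \sum_t F t.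
Proof.
move=> F_gt0; rewrite (bigD1 t0) //= ltr_pwDl // sumr_ge0 // => t _.
exact: ltW.
Qed.

Lemma sumr_mul_centered (T : finType) (R : comPzRingType) (w f p : T -> R) :
  \sum_t w t * f t * p t - (\sum_t w t * f t) * \sum_t w t * p t
  = \sum_t w t * (f t - \sum_s w s * f s) * p t.
Proof.
rewrite mulr_sumr -sumrB; apply: eq_bigr => t _.
by rewrite mulrBr mulrBl mulrCA mulrA.
Qed.

Section Hyperbolic.
Variable R : realType.

Lemma coshN (t : R) : cosh (- t) = cosh t.
Proof. by rewrite /cosh opprK addrC. Qed.

Lemma cosh_sigmoid (t : R) : 2 * cosh t * sigmoid (2 * t) = expR t.
Proof.
have e_gt0 : 0 < expR t := expR_gt0 t.
rewrite /cosh /sigmoid.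
have -> : - (2 * t) = - t + - t by ring.
rewrite expRD expRN.
have den_gt0 : 0 < 1 + (expR t)^-1 * (expR t)^-1.
  by rewrite addr_gt0 // mulr_gt0 // invr_gt0.
by field; rewrite !gt_eqF.
Qed.

Lemma expR_spin_mul (b : bool) (t : R) :
  expR (spin R b * t) = 2 * cosh t * sigmoid (2 * spin R b * t).
Proof.
have -> : cosh t = cosh (spin R b * t) by case: b; rewrite /spin ?mul1r ?mulN1r ?coshN.
by rewrite -[2 * _ * t]mulrA cosh_sigmoid.
Qed.

Lemma sum_expR_spin_mul (t : R) : \sum_b expR (spin R b * t) = 2 * cosh t.
Proof. by rewrite big_bool /spin /cosh mul1r mulN1r mulrC divfK ?pnatr_eq0. Qed.

End Hyperbolic.

Section RBMMarginals.
Variables (R : realType) (n m : nat).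
Variables (J : 'I_n -> 'I_m -> R) (h : 'I_n -> R) (g : 'I_m -> R).
Local Notation F := {ffun 'I_n -> bool}.
Local Notation Q := {ffun 'I_m -> bool}.
Local Notation field := (field J h).
Local Notation weight := (weight J h g).
Local Notation lambda_num := (lambda_num J h g).
Local Notation sig a i q := (sigmoid (2 * spin R (a i) * field i q)).

Lemma weightE (x : F) (q : Q) :
  weight x q = expR (\sum_(j < m) g j * spin R (q j))
               * \prod_(i < n) expR (spin R (x i) * field i q).
Proof.
rewrite /weight -expR_sum -expRD addrC; congr (expR (_ + _)).
rewrite -big_split /=; apply: eq_bigr => i _.
rewrite /field mulrDr mulr_sumr (mulrC (h i)); congr (_ + _).
by apply: eq_bigr => j _; rewrite mulrA.
Qed.

Lemma sum_agrees_weight (B : {set 'I_n}) (a : F) (q : Q) :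
  \sum_(x | agrees B a x) weight x q
  = expR (\sum_(j < m) g j * spin R (q j))
    * \prod_(i < n) (if i \in B then expR (spin R (a i) * field i q)
                     else 2 * cosh (field i q)).
Proof.
under eq_bigr do rewrite weightE.
rewrite -mulr_sumr (sum_agrees_prod _ _ _ B a (fun i b => expR (spin R b * field i q))).
by congr (_ * _); apply: eq_bigr => i _; rewrite sum_expR_spin_mul.
Qed.

Lemma sum_agrees_weight_setU (A S : {set 'I_n}) (a : F) (q : Q) : [disjoint A & S] ->
  \sum_(x | agrees (A :|: S) a x) weight x q
  = 2 ^+ #|~: S| * lambda_num S a q * \prod_(i in A) sig a i q.
Proof.
move=> dAS; rewrite sum_agrees_weight (bigID (mem S)) /=.
have -> : \prod_(i | i \notin S)
      (if i \in A :|: S then expR (spin R (a i) * field i q) else 2 * cosh (field i q))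
    = \prod_(i in ~: S) (2 * cosh (field i q) * (if i \in A then sig a i q else 1)).
  apply: eq_big => [i | i iS]; first by rewrite finset.in_setC.
  by rewrite finset.in_setU (negbTE iS) orbF; case: ifP; rewrite ?mulr1 // expR_spin_mul.
have -> : \prod_(i in S)
      (if i \in A :|: S then expR (spin R (a i) * field i q) else 2 * cosh (field i q))
    = \prod_(i in S) expR (spin R (a i) * field i q).
  by apply: eq_bigr => i iS; rewrite finset.in_setU iS orbT.
rewrite big_split big_split /= prodr_const.
have -> : \prod_(i in ~: S) (if i \in A then sig a i q else 1) = \prod_(i in A) sig a i q.
  rewrite -big_mkcondr; apply: eq_bigl => i; rewrite finset.in_setC andbC.
  by case: (boolP (i \in A)) => // iA; rewrite (disjointFr dAS iA).
rewrite /lambda_num; ring.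
Qed.

Lemma lambda_num_gt0 (S : {set 'I_n}) (a : F) (q : Q) : 0 < lambda_num S a q.
Proof.
rewrite /lambda_num !mulr_gt0 ?expR_gt0 //; apply: prodr_gt0 => i _.
  exact: expR_gt0.
by rewrite /cosh divr_gt0 // addr_gt0 ?expR_gt0.
Qed.

Lemma partition_fn_gt0 : 0 < partition_fn J h g.
Proof.
apply: (@sumr_gt0 F _ [ffun => false]) => x.
apply: (@sumr_gt0 Q _ [ffun => false]) => q.
exact: expR_gt0.
Qed.

Lemma probE_latent (B : {set 'I_n}) (a : F) :
  probE J h g B a = (\sum_q \sum_(x | agrees B a x) weight x q) / partition_fn J h g.
Proof. by rewrite /probE /probX -mulr_suml exchange_big. Qed.

Lemma condP_lambda (A S : {set 'I_n}) (a : F) : [disjoint A & S] ->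
  condP J h g A S a = \sum_q lambda J h g S a q * \prod_(i in A) sig a i q.
Proof.
move=> dAS.
have Z_neq0 : partition_fn J h g != 0 by rewrite gt_eqF // partition_fn_gt0.
have L_neq0 : \sum_q lambda_num S a q != 0.
  by rewrite gt_eqF // (@sumr_gt0 Q _ [ffun => false]) // => q; exact: lambda_num_gt0.
have c_neq0 : (2 : R) ^+ #|~: S| != 0 by rewrite expf_neq0 ?pnatr_eq0.
rewrite /condP !probE_latent -{2}(finset.set0U S).
have d0S : [disjoint finset.set0 & S] by rewrite -finset.setI_eq0 finset.set0I.
under eq_bigr do rewrite sum_agrees_weight_setU //.
under [in X in _ / (X / _)]eq_bigr do rewrite sum_agrees_weight_setU // big_set0 mulr1.
under eq_bigr do rewrite -mulrA.
rewrite -!mulr_sumr /lambda.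
under [RHS]eq_bigr do rewrite mulrAC.
rewrite -mulr_suml.
by field; rewrite Z_neq0 L_neq0 c_neq0.
Qed.

End RBMMarginals.

Theorem lemma7 (R : realType) (n m : nat)
  (J : 'I_n -> 'I_m -> R) (h : 'I_n -> R) (g : 'I_m -> R)
  (u : 'I_n) (I S : {set 'I_n}) (a : {ffun 'I_n -> bool}) :
  u \notin I -> u \notin S -> [disjoint I & S] ->
  nu J h g u I S a =
  `| \sum_(q : {ffun 'I_m -> bool})
       fbar J h g u S a q * \prod_(i in I) sigmoid (2 * spin R (a i) * field J h i q) |.
Proof.
move=> uI uS dIS.
have duS : [disjoint [set u] & S] by rewrite disjoints1.
have duIS : [disjoint [set u] :|: I & S].
  by rewrite -finset.setI_eq0 finset.setIUl finset.setU_eq0 !finset.setI_eq0 duS.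
rewrite /nu !condP_lambda //.
under eq_bigr do rewrite big_setU1 //= mulrA.
under [X in _ - X * _]eq_bigr do rewrite big_set1.
by rewrite sumr_mul_centered.
Qed.
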